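(* Let $G$ be a simple cubic graph, and let $(G',r)$ be constructed from $G$ as described in the context. Then $\kappa(G',r)=\tau(G)+|E(G)|$, where $\tau(G)$ is the minimum size of a vertex cover of $G$.
   Context: Construction of $G'$ from a cubic graph $G$: start with $G$. (1) For each edge $e=xy$ of $G$, delete $xy$, add three new vertices $w_{x,e},w_e,w_{y,e}$ and the edges $xw_{x,e}, w_{x,e}w_e, w_ew_{y,e}, w_{y,e}y$. (2) For each edge $e=xy$ of $G$, add two new vertices $z_{x,e},z_{y,e}$ and the edges $w_{x,e}z_{x,e}, z_{x,e}w_e, w_ez_{y,e}, z_{y,e}w_{y,e}$ (so $\{w_{x,e},w_e,z_{x,e}\}$ and $\{w_{y,e},w_e,z_{y,e}\}$ induce triangles). (3) For every vertex $x$ of $G$ with incident edges $e,f,g$, add the edges $w_{x,e}w_{x,f}, w_{x,e}w_{x,g}, w_{x,f}w_{x,g}$. Requirements: for every edge $e=xy$ of $G$, $r(w_{x,e})=r(w_{y,e})=4$ and $r(w_e)=3$; $r(v')=0$ for all other vertices $v'$ of $G'$. For a graph $H$, a set $S\subseteq V(H)$ and $v\in V(H)\setminus S$, a $v$--$S$ fan of order $k$ is a collection of $k$ paths, each connecting $v$ to a vertex of $S$, pairwise vertex-disjoint except at $v$; $v$ is $k$-linked to $S$ if such a fan exists. A vector connectivity set for $(H,r)$ is a set $S$ such that every $v\in V(H)\setminus S$ is $r(v)$-linked to $S$; $\kappa(H,r)$ is the minimum size of such a set. A vertex cover of $G$ is a set of vertices containing an endpoint of every edge. *)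

From mathcomp Require Import all_boot.
Set Implicit Arguments. Unset Strict Implicit. Unset Printing Implicit Defensive.

Section General.
Variable H : finType.
Variable adj : rel H.

(* a v--S fan of order k: k paths v = v0, v1, ..., vm (stored as the list
   [v1;...;vm]) each ending in S, internally simple, pairwise vertex-disjoint
   except at v *)
Definition fan (v : H) (S : {set H}) (k : nat) : Prop :=
  exists ps : 'I_k -> seq H,
    (forall i, [/\ path adj v (ps i), uniq (v :: ps i) & last v (ps i) \in S]) /\
    (forall i j, i != j -> [disjoint ps i & ps j]).

Definition linked (v : H) (S : {set H}) (k : nat) : Prop := fan v S k.

Definition vc_set (r : H -> nat) (S : {set H}) : Prop :=
  forall v, v \notin S -> linked v S (r v).

Definition is_kappa (r : H -> nat) (n : nat) : Prop :=
  (exists S, vc_set r S /\ #|S| = n) /\ (forall S, vc_set r S -> n <= #|S|).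
End General.

Section Cubic.
Variable T : finType.
Variable e : rel T.

Definition vertex_cover (C : {set T}) : bool :=
  [forall x, forall y, e x y ==> (x \in C) || (y \in C)].

Definition tau : nat :=
  #|[arg min_(C < [set: T] | vertex_cover C) #|C| ]|.

Definition is_edge (s : {set T}) : bool :=
  [exists x, exists y, e x y && (s == [set x; y])].

Definition nedges : nat := #|[set s : {set T} | is_edge s]|.

(* raw vertices:  inl (inl x)      = original vertex x
                  inl (inr (x,y))  = w_{x,xy}
                  inr (inl s)      = w_e  for the edge e = s = {x,y}
                  inr (inr (x,y))  = z_{x,xy}                              *)
Definition Vraw : finType := ((T + (T * T)) + ({set T} + (T * T)))%type.

Definition validv (v : Vraw) : bool :=
  match v with
  | inl (inl _) => true
  | inl (inr (x, y)) => e x y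
  | inr (inl s) => is_edge s
  | inr (inr (x, y)) => e x y
  end.

Definition VG' : finType := {v : Vraw | validv v}.

Definition adj0 (u v : Vraw) : bool :=
  match u, v with
  | inl (inl x), inl (inr (x', _)) => x == x'
  | inl (inr (x, y)), inr (inl s) => s == [set x; y]
  | inl (inr (x, y)), inr (inr (x', y')) => (x == x') && (y == y')
  | inr (inr (x, y)), inr (inl s) => s == [set x; y]
  | inl (inr (x, y)), inl (inr (x', y')) => (x == x') && (y != y')  (* triangle at x *)
  | _, _ => false
  end.

Definition adjG' : rel VG' := fun u v => adj0 (val u) (val v) || adj0 (val v) (val u).

Definition rG' (v : VG') : nat :=
  match val v with
  | inl (inr _) => 4
  | inr (inl _) => 3
  | _ => 0
  end.
End Cubic.

From mathcomp Require Import all_boot.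
Set Implicit Arguments. Unset Strict Implicit. Unset Printing Implicit Defensive.

(* Call {x} together with the three vertices w_{x,e} the gadget of the vertex x,
   and {w_e, z_{x,e}, z_{y,e}} the gadget of the edge e = xy; the gadgets
   partition V(G').
   Lower bound: {w_{x,e}, w_{y,e}} separates w_e from the rest of G', so a
   vector connectivity set S meets the gadget of every edge.  If S misses the
   gadget of x, then w_e and the two other w_{x,f} separate w_{x,e} from S
   unless z_{x,e} is in S; hence S contains both z-vertices of every edge with
   no endpoint in the set C of vertices whose gadget meets S.  So
   |S| >= |C| + |E(G)| + d, where d counts these edges, and C plus one endpoint
   of each of them is a vertex cover.
   Upper bound: for a minimum vertex cover C, take C together with, for each
   edge, one z-vertex lying next to an endpoint in C; the required fans are
   written down explicitly. *)

Section Fans.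
Variables (H : finType) (adj : rel H).

Lemma mem_flatten_nth (L : seq (seq H)) i x :
  x \in nth [::] L i -> x \in flatten L.
Proof.
have [iL|Li] := ltnP i (size L); last by rewrite nth_default.
by move=> xLi; apply/flattenP; exists (nth [::] L i); rewrite ?mem_nth.
Qed.

Lemma uniq_flatten_nth (L : seq (seq H)) i :
  uniq (flatten L) -> uniq (nth [::] L i).
Proof.
elim: L i => [|p L IH] [|i] //=; rewrite cat_uniq => /and3P[up _ uL] //.
exact: IH.
Qed.

Lemma disjoint_flatten_nth (L : seq (seq H)) i j :
  uniq (flatten L) -> i != j -> [disjoint nth [::] L i & nth [::] L j].
Proof.
elim: L i j => [|p L IH] i j; first by rewrite !nth_nil disjoint_has.
rewrite /= cat_uniq => /and3P[_ pL uL].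
have disj_p k : [disjoint p & nth [::] L k].
  rewrite disjoint_has; apply/hasPn => x xp; apply/negP => /mem_flatten_nth xL.
  by case/hasP: pL; exists x.
case: i j => [|i] [|j] //= ij; last exact: IH.
by rewrite disjoint_sym disj_p.
Qed.

Lemma fan_of_paths v (S : {set H}) (L : seq (seq H)) :
  all (fun p => path adj v p && (last v p \in S)) L -> uniq (v :: flatten L) ->
  fan adj v S (size L).
Proof.
move=> /allP pathsL /= /andP[vL uL].
exists (fun i => nth [::] L i); split=> [i|i j]; last exact: disjoint_flatten_nth.
have /pathsL/andP[pi lasti] := mem_nth [::] (ltn_ord i).
split=> //=; rewrite uniq_flatten_nth // andbT.
by apply: contra vL; apply: mem_flatten_nth.
Qed.

(* Easy direction of Menger's theorem. *)
Lemma fan_le_cut (K : finType) (h : H -> K) v (S : {set H}) k (Y : {set K}) :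
  injective h -> fan adj v S k ->
  (forall p, path adj v p -> uniq (v :: p) -> last v p \in S ->
     exists2 u, u \in p & h u \in Y) ->
  k <= #|Y|.
Proof.
move=> h_inj [ps [ps_ok ps_disj]] cutY.
have hit i : exists u, (u \in ps i) && (h u \in Y).
  by have [pi ui li] := ps_ok i; have [u ??] := cutY _ pi ui li; exists u; apply/andP.
pose g i := h (xchoose (hit i)).
have gY i : g i \in Y by have /andP[] := xchooseP (hit i).
have g_inj : injective g.
  move=> i j /h_inj gij; apply/eqP; apply: contraT => ij.
  have /andP[ui _] := xchooseP (hit i); have /andP[uj _] := xchooseP (hit j).
  by move: (ps_disj i j ij); rewrite disjoint_has => /hasPn/(_ _ ui); rewrite gij uj.
by rewrite -[k]card_ord -(card_image g_inj); apply/subset_leq_card/subsetP=> _ /imageP[i _ ->].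
Qed.

Lemma path_to_set_cons v (S : {set H}) p :
  path adj v p -> last v p \in S -> v \notin S ->
  exists u p', [/\ p = u :: p', adj v u, path adj u p' & last u p' \in S].
Proof.
by case: p => [|u p'] /=; [move=> _ -> | move=> /andP[vu pu] lastS _; exists u, p'].
Qed.

End Fans.

Lemma sum_card_fibres_le (K I : finType) (f : K -> I) (A : {set K}) (P : pred I) :
  \sum_(i | P i) #|[set u in A | f u == i]| <= #|A|.
Proof.
rewrite -sum1_card (partition_big f predT) //= [X in _ <= X](bigID P) /=.
apply: leq_trans (leq_addr _ _); apply: leq_sum => i _.
by rewrite -sum1_card; apply/eq_leq/eq_bigl => u; rewrite inE.
Qed.

Lemma set2_eq_cases (T : finType) (a b x y : T) :
  [set a; b] = [set x; y] -> (a = x /\ b = y) \/ (a = y /\ b = x).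
Proof.
move=> ab_xy.
have: a \in [set x; y] by rewrite -ab_xy !inE eqxx.
have: b \in [set x; y] by rewrite -ab_xy !inE eqxx orbT.
have: x \in [set a; b] by rewrite ab_xy !inE eqxx.
have: y \in [set a; b] by rewrite ab_xy !inE eqxx orbT.
rewrite !inE => /orP[]/eqP-> /orP[]/eqP-> /orP[]/eqP ax /orP[]/eqP bx; subst; auto.
Qed.

Lemma set2_eqF (T : finType) (x t t' : T) :
  t != x -> t != t' -> ([set x; t] == [set x; t']) = false.
Proof.
move=> tx tt'; apply: contraNF tt' => /eqP/set2_eq_cases[[_ ->]|[_ t'x]] //.
by rewrite t'x eqxx in tx.
Qed.

Lemma eq_inl (A B : eqType) (a a' : A) : (@inl A B a == inl a') = (a == a').
Proof. by apply/eqP/eqP => [[]|->]. Qed.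

Lemma eq_inr (A B : eqType) (b b' : B) : (@inr A B b == inr b') = (b == b').
Proof. by apply/eqP/eqP => [[]|->]. Qed.

Section VertexCover.
Variables (T : finType) (e : rel T).

Lemma is_edge_set2 x y : e x y -> is_edge e [set x; y].
Proof. by move=> exy; apply/existsP; exists x; apply/existsP; exists y; rewrite exy eqxx. Qed.

Lemma vertex_cover_setT : vertex_cover e [set: T].
Proof. by apply/forallP=> x; apply/forallP=> y; rewrite inE implybT. Qed.

Lemma tau_le_cover C : vertex_cover e C -> tau e <= #|C|.
Proof.
by rewrite /tau; case: arg_minnP => [|C0 _ min_C0]; [exact: vertex_cover_setT | apply: min_C0].
Qed.

Lemma tau_cover : exists2 C, vertex_cover e C & #|C| = tau e.
Proof.
by rewrite /tau; case: arg_minnP => [|C0 cover_C0 _]; [exact: vertex_cover_setT | exists C0].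
Qed.

Lemma tau_le_add_uncovered (C : {set T}) :
  tau e <= #|C| + #|[set s | is_edge e s & s \subset ~: C]|.
Proof.
set D := [set s | _ & _].
pose B := [set x | Some x \in [set [pick y in s] | s : {set T} in D]].
have card_B : #|B| <= #|D|.
  rewrite -(card_imset B (@Some_inj _)).
  apply: leq_trans (leq_imset_card (fun s : {set T} => [pick y in s]) D).
  by apply/subset_leq_card/subsetP => _ /imsetP[x + ->]; rewrite inE.
apply: leq_trans (tau_le_cover (C := C :|: B) _) _; last first.
  by rewrite cardsU (leq_trans (leq_subr _ _)) ?leq_add2l.
apply/forallP=> x; apply/forallP=> y; apply/implyP=> exy; rewrite !in_setU.
have [//|xC] := boolP (x \in C); have [|yC] := boolP (y \in C); first by rewrite orbT.
have xyD : [set x; y] \in D.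
  rewrite inE; apply/andP; split.
    exact: is_edge_set2.
  by apply/subsetP=> z; rewrite !inE => /orP[]/eqP->.
have [z xy_z pick_z] : exists2 z, z \in [set x; y] & [pick z in [set x; y]] = Some z.
  by case: pickP => [z|/(_ x)]; [exists z | rewrite !inE eqxx].
have zB : z \in B by rewrite inE -pick_z imset_f.
by move: xy_z zB; rewrite !inE => /orP[]/eqP-> ->; rewrite ?orbT.
Qed.
End VertexCover.

Section Gprime.
Variables (T : finType) (e : rel T).
Local Notation V := (VG' e).
Local Notation adj := (@adjG' T e).
Hypothesis e_sym : symmetric e.
Hypothesis e_irr : irreflexive e.
Hypothesis e_cubic : forall x : T, #|[set y | e x y]| = 3.

Definition vX x : V := exist _ (inl (inl x)) isT.
Definition vW x y (exy : e x y) : V := exist _ (inl (inr (x, y))) exy.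
Definition vZ x y (exy : e x y) : V := exist _ (inr (inr (x, y))) exy.
Definition vE x y (exy : e x y) : V := exist _ (inr (inl [set x; y])) (is_edge_set2 exy).

(* [inl x] is the gadget of the vertex x, [inr s] that of the edge s. *)
Definition gadget (q : Vraw T) : T + {set T} :=
  match q with
  | inl (inl x) | inl (inr (x, _)) => inl x
  | inr (inl s) => inr s
  | inr (inr (x, y)) => inr [set x; y]
  end.

Lemma edge_neq x y : e x y -> x != y.
Proof. by apply: contraTneq => ->; rewrite e_irr. Qed.

Lemma edge_sym x y : e x y -> e y x.
Proof. by rewrite e_sym. Qed.

Lemma card_other_neighbours x y : e x y -> #|[set t | e x t] :\ y| = 2.
Proof. by move=> exy; have := cardsD1 y [set t | e x t]; rewrite e_cubic inE exy => -[]. Qed.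

Lemma other_neighbours x y : e x y ->
  exists a b, [/\ e x a, e x b, a != y, b != y & a != b].
Proof.
move=> exy; have /eqP/cards2P[a [b [ab Nx]]] := card_other_neighbours exy.
have : a \in [set t | e x t] :\ y by rewrite Nx !inE eqxx.
have : b \in [set t | e x t] :\ y by rewrite Nx !inE eqxx orbT.
by rewrite !inE => /andP[b_y exb] /andP[a_y exa]; exists a, b.
Qed.

Lemma adj_from_wE (u w : V) s : adj u w -> val u = inr (inl s) ->
  exists a b, s = [set a; b] /\ (val w = inl (inr (a, b)) \/ val w = inr (inr (a, b))).
Proof.
case: u => [r ?]; rewrite /adjG' /= => /[swap] ->.
case: w => [[[x|[a b]]|[s'|[a b]]] ?]; rewrite /= ?orbF // => /eqP->;
  by exists a, b; auto.
Qed.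

Lemma adj_from_z (u w : V) a b : adj u w -> val u = inr (inr (a, b)) ->
  val w = inr (inl [set a; b]) \/ val w = inl (inr (a, b)).
Proof.
case: u => [r ?]; rewrite /adjG' /= => /[swap] ->.
case: w => [[[x|[c d]]|[s'|[c d]]] ?]; rewrite /= ?orbF //.
- by case/andP=> /eqP-> /eqP->; right.
- by move=> /eqP->; left.
Qed.

Lemma adj_from_x (u w : V) x : adj u w -> val u = inl (inl x) ->
  exists t, val w = inl (inr (x, t)).
Proof.
case: u => [r ?]; rewrite /adjG' /= => /[swap] ->.
case: w => [[[z|[c d]]|[s'|[c d]]] ?]; rewrite /= ?orbF //.
by move=> /eqP->; exists d.
Qed.

Lemma adj_from_w (u w : V) x y : adj u w -> val u = inl (inr (x, y)) ->
  [\/ val w = inr (inl [set x; y]), val w = inr (inr (x, y)), val w = inl (inl x) |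
      exists2 t, t != y & val w = inl (inr (x, t))].
Proof.
case: u => [r ?]; rewrite /adjG' /= => /[swap] ->.
case: w => [[[z|[c d]]|[s'|[c d]]] ?]; rewrite /= //.
- by move=> /eqP->; constructor 3.
- by case/orP=> /andP[/eqP<- yd]; constructor 4; exists d; rewrite // eq_sym.
- by rewrite orbF => /eqP->; constructor 1.
- by rewrite orbF => /andP[/eqP<- /eqP<-]; constructor 2.
Qed.

Lemma no_fan_wE (v : V) (S : {set V}) s :
  val v = inr (inl s) -> (forall u, u \in S -> gadget (val u) != inr s) ->
  ~ fan adj v S 3.
Proof.
move=> vs S_s fan3.
have vS : v \notin S by apply/negP => /S_s; rewrite vs eqxx.
have := valP v; rewrite vs => /existsP[x /existsP[y /andP[exy /eqP sxy]]].
pose Y : {set Vraw T} := [set inl (inr (x, y)); inl (inr (y, x))].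
have Y_ab a b : s = [set a; b] -> inl (inr (a, b)) \in Y.
  by rewrite sxy => /set2_eq_cases[[<- <-]|[<- <-]]; rewrite !inE eqxx ?orbT.
suff : 3 <= #|Y| by rewrite cards2; case: (_ != _).
apply: (fan_le_cut val_inj fan3) => p pv up lastp.
have [u [p' [pE vu pu lastu]]] := path_to_set_cons pv lastp vS; subst p.
have [a [b [sab [ua|ub]]]] := adj_from_wE vu vs.
  by exists u; [rewrite inE eqxx | rewrite ua Y_ab].
have uS : u \notin S by apply/negP => /S_s; rewrite ub sab eqxx.
have [u' [p'' [p'E uu' _ _]]] := path_to_set_cons pu lastu uS; subst p'.
have [u'v|u'w] := adj_from_z uu' ub.
  have u'_v : u' = v by apply: val_inj; rewrite u'v vs sab.
  by move: up; rewrite u'_v /= !inE eqxx orbT.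
by exists u'; [rewrite !inE eqxx orbT | rewrite u'w Y_ab].
Qed.

Lemma no_fan_w (v : V) (S : {set V}) x y :
  val v = inl (inr (x, y)) -> (forall u, u \in S -> gadget (val u) != inl x) ->
  (forall u, u \in S -> val u != inr (inr (x, y))) -> ~ fan adj v S 4.
Proof.
move=> vw S_x S_z fan4.
have vS : v \notin S by apply/negP => /S_x; rewrite vw eqxx.
have exy : e x y by have := valP v; rewrite vw.
pose Y : {set Vraw T} :=
  inr (inl [set x; y]) |: [set inl (inr (x, t)) | t in [set t | e x t] :\ y].
have Y_t t : t != y -> e x t -> inl (inr (x, t)) \in Y.
  by move=> ty ext; rewrite in_setU1 imset_f ?orbT // !inE ty.
have card_Y : #|Y| <= 3.
  rewrite cardsU1 -(card_other_neighbours exy).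
  exact: leq_add (leq_b1 _) (leq_imset_card _ _).
suff : 4 <= #|Y| by move/leq_trans/(_ card_Y).
apply: (fan_le_cut val_inj fan4) => p pv up lastp.
have [u [p' [pE vu pu lastu]]] := path_to_set_cons pv lastp vS; subst p.
have [uE|uz|ux|[t ty uw]] := adj_from_w vu vw.
- by exists u; [rewrite inE eqxx | rewrite uE !inE eqxx].
- have uS : u \notin S by apply/negP => /S_z; rewrite uz eqxx.
  have [u' [p'' [p'E uu' _ _]]] := path_to_set_cons pu lastu uS; subst p'.
  have [u'E|u'v] := adj_from_z uu' uz.
    by exists u'; [rewrite !inE eqxx orbT | rewrite u'E !inE eqxx].
  have u'_v : u' = v by apply: val_inj; rewrite u'v vw.
  by move: up; rewrite u'_v /= !inE eqxx orbT.
- have uS : u \notin S by apply/negP => /S_x; rewrite ux eqxx.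
  have [u' [p'' [p'E uu' _ _]]] := path_to_set_cons pu lastu uS; subst p'.
  have [t u't] := adj_from_x uu' ux.
  have ext : e x t by have := valP u'; rewrite u't.
  have [ty|ty] := eqVneq t y.
    have u'_v : u' = v by apply: val_inj; rewrite u't vw ty.
    by move: up; rewrite u'_v /= !inE eqxx orbT.
  by exists u'; [rewrite !inE eqxx orbT | rewrite u't Y_t].
- have ext : e x t by have := valP u; rewrite uw.
  by exists u; [rewrite inE eqxx | rewrite uw Y_t].
Qed.

Section LowerBound.
Variable S : {set V}.
Hypothesis S_vc : vc_set adj (@rG' T e) S.

Definition owners : {set T} := [set x | [exists u in S, gadget (val u) == inl x]].

Lemma edge_gadget_meets s : is_edge e s -> exists2 u, u \in S & gadget (val u) == inr s.
Proof.
move=> es; apply/exists_inP; apply: contraT => /exists_inPn S_s.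
pose v : V := exist _ (inr (inl s)) es.
have vS : v \notin S by apply/negP => /S_s; rewrite eqxx.
by case: (@no_fan_wE v S s (erefl _) S_s (S_vc vS)).
Qed.

Lemma vZ_in_vc_set x y (exy : e x y) : x \notin owners -> vZ exy \in S.
Proof.
rewrite inE => /exists_inPn S_x; apply/negPn/negP => zS.
have vS : vW exy \notin S by apply/negP => /S_x; rewrite eqxx.
apply: (@no_fan_w (vW exy) S x y (erefl _) S_x _ (S_vc vS)) => u uS.
by apply: contraNneq zS => uz; rewrite (_ : vZ exy = u) //; apply: val_inj.
Qed.

Lemma card_edge_gadget s : is_edge e s ->
  (s \subset ~: owners) + 1 <= #|[set u in S | gadget (val u) == inr s]|.
Proof.
move=> es; have [sC|_] := boolP (s \subset ~: owners); last first.
  have [u uS us] := edge_gadget_meets es.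
  by rewrite card_gt0; apply/set0Pn; exists u; rewrite inE uS.
have /existsP[x /existsP[y /andP[exy /eqP sxy]]] := es.
have eyx := edge_sym exy.
have [xC yC] : x \notin owners /\ y \notin owners.
  by rewrite -!in_setC !(subsetP sC) // sxy !inE eqxx ?orbT.
apply/card_gt1P; exists (vZ exy), (vZ eyx).
rewrite !inE !vZ_in_vc_set //= sxy eqxx setUC eqxx; split=> //.
by apply/eqP => -[yx _]; move: (edge_neq exy); rewrite yx eqxx.
Qed.

Lemma vc_set_card_ge : tau e + nedges e <= #|S|.
Proof.
pose P k := match k with inl x => x \in owners | inr s => is_edge e s end.
have := sum_card_fibres_le (fun u : V => gadget (val u)) S P.
rewrite big_sumType /=; apply: leq_trans.
apply: leq_trans (leq_add (tau_le_add_uncovered e owners) (leqnn _)) _.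
rewrite -addnA leq_add //.
  rewrite -sum1_card; apply: leq_sum => x; rewrite inE => /exists_inP[u uS ux].
  by rewrite card_gt0; apply/set0Pn; exists u; rewrite inE uS.
rewrite /nedges -!sum1dep_card big_mkcondr -big_split /=.
by apply: leq_sum => s; apply: card_edge_gadget.
Qed.
End LowerBound.

Definition raw_route x t (c : bool) : seq (Vraw T) :=
  if c then [:: inr (inr (x, t))] else [:: inr (inl [set x; t]); inr (inr (t, x))].

Lemma uniq_fan_w_raw x y a b (cx cy ca cb : bool) :
  x != y -> x != a -> x != b -> a != y -> b != y -> a != b -> (~~ cx -> cy) ->
  uniq (inl (inr (x, y)) ::
          (if cx then [:: inl (inl x)]
           else [:: inr (inl [set x; y]); inl (inr (y, x)); inl (inl y)])
        ++ raw_route x y cy ++ (inl (inr (x, a)) :: raw_route x a ca)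
        ++ (inl (inr (x, b)) :: raw_route x b cb)).
Proof.
move=> xy xa xb ay b_y ab cxy.
have yx : y != x by rewrite eq_sym.
have ax : a != x by rewrite eq_sym.
have bx : b != x by rewrite eq_sym.
have ya : y != a by rewrite eq_sym.
have yb : y != b by rewrite eq_sym.
have ba : b != a by rewrite eq_sym.
rewrite /raw_route; case: cx cxy => cxy; [|rewrite cxy //];
  case: cy cxy => _; case: ca; case: cb;
  rewrite /= !inE ?(eq_inl, eq_inr, xpair_eqE) ?eqxx /=.
all: rewrite ?(set2_eqF yx ya) ?(set2_eqF yx yb) ?(set2_eqF ax ab).
all: by rewrite ?(negbTE xy) ?(negbTE yx) ?(negbTE xa) ?(negbTE ax) ?(negbTE xb)
  ?(negbTE bx) ?(negbTE ya) ?(negbTE yb) ?(negbTE ab).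
Qed.

Lemma uniq_fan_wE_raw x y a (cx : bool) :
  x != y -> a != y ->
  uniq (inr (inl [set x; y]) :: [:: inr (inr (x, y)); inl (inr (y, x)); inl (inl y)] ++
     (if cx then [:: inl (inr (x, y)); inl (inl x)]
      else [:: inl (inr (x, y)); inl (inr (x, a)); inr (inr (x, a))]) : seq (Vraw T)).
Proof.
move=> xy ay; have yx : y != x by rewrite eq_sym.
have ya : y != a by rewrite eq_sym.
case: cx; rewrite /= !inE ?(eq_inl, eq_inr, xpair_eqE) ?eqxx /=.
all: by rewrite ?(negbTE xy) ?(negbTE yx) ?(negbTE ay) ?(negbTE ya) /= ?andbF.
Qed.

Section UpperBound.
Variable C : {set T}.
Hypothesis C_cover : vertex_cover e C.

(* [chosen x y]: the edge xy contributes z_{x,xy}; then y lies in C. *)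
Definition chosen x y := (x \notin C) || ((y \in C) && (enum_rank x < enum_rank y)).

Definition S_of_cover : {set V} :=
  vX @: C :|: [set v : V | if val v is inr (inr (x, y)) then chosen x y else false].

Lemma cover_edge x y : e x y -> (x \in C) || (y \in C).
Proof. by move=> exy; move/forallP/(_ x)/forallP/(_ y)/implyP: C_cover; apply. Qed.

Lemma chosen_or x y : e x y -> chosen x y || chosen y x.
Proof.
move=> exy; rewrite /chosen; case: (x \in C); case: (y \in C) => //=.
case: ltngtP => // /val_inj/enum_rank_inj xy.
by move: exy; rewrite xy e_irr.
Qed.

Lemma chosen_excl x y : e x y -> chosen x y -> ~~ chosen y x.
Proof.
move=> /cover_edge; rewrite /chosen; case: (x \in C); case: (y \in C) => //= _.
by rewrite -leqNgt; apply: ltnW.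
Qed.

Lemma chosen_cover x y : e x y -> chosen x y -> y \in C.
Proof. by move=> /cover_edge; rewrite /chosen; case: (x \in C); case: (y \in C). Qed.

Lemma vX_in_S_of_cover x : x \in C -> vX x \in S_of_cover.
Proof. by move=> xC; rewrite in_setU imset_f. Qed.

Lemma vZ_in_S_of_cover x y (exy : e x y) : chosen x y -> vZ exy \in S_of_cover.
Proof. by move=> xy; rewrite in_setU inE /= xy orbT. Qed.

Definition route x t (ext : e x t) : seq V :=
  if chosen x t then [:: vZ ext] else [:: vE ext; vZ (edge_sym ext)].

Lemma route_ok x t (ext : e x t) :
  path adj (vW ext) (route ext) && (last (vW ext) (route ext) \in S_of_cover).
Proof.
rewrite /route; case: ifP => xt /=; first by rewrite vZ_in_S_of_cover // /adjG' /= !eqxx.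
have tx : chosen t x by move: (chosen_or ext); rewrite xt.
by rewrite vZ_in_S_of_cover // /adjG' /= setUC !eqxx.
Qed.

Lemma map_val_route x t (ext : e x t) : map val (route ext) = raw_route x t (chosen x t).
Proof. by rewrite /route /raw_route; case: (chosen x t). Qed.

Lemma fan_w x y (exy : e x y) : fan adj (vW exy) S_of_cover 4.
Proof.
have [a [b [exa exb ay b_y ab]]] := other_neighbours exy.
(* When x is not in C, the first path leaves through w_{xy}; this is harmless
   because the route of xy is then [:: z_{x,xy}]. *)
pose P0 := if x \in C then [:: vX x] else [:: vE exy; vW (edge_sym exy); vX y].
have -> : 4 = size [:: P0; route exy; vW exa :: route exa; vW exb :: route exb] by [].
apply: fan_of_paths.
  have w_adj t (ext : e x t) : t != y -> adj (vW exy) (vW ext).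
    by move=> ty; rewrite /adjG' /= eqxx eq_sym ty.
  apply/and5P; split=> //; first 1 last.
  - exact: route_ok.
  - by rewrite -andbA (route_ok exa) w_adj.
  - by rewrite -andbA (route_ok exb) w_adj.
  rewrite /P0; case: ifP => xC /=; first by rewrite vX_in_S_of_cover // /adjG' /= eqxx.
  have yC : y \in C by have := cover_edge exy; rewrite xC.
  by rewrite vX_in_S_of_cover // /adjG' /= setUC !eqxx.
have cxy : ~~ (x \in C) -> chosen x y by rewrite /chosen => ->.
have := @uniq_fan_w_raw x y a b (x \in C) (chosen x y) (chosen x a) (chosen x b)
  (edge_neq exy) (edge_neq exa) (edge_neq exb) ay b_y ab cxy.
rewrite -(map_inj_uniq val_inj) !(map_cons, map_cat, map_val_route) cats0 /P0.
by case: (x \in C).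
Qed.

Lemma fan_wE_chosen x y (exy : e x y) : chosen x y -> fan adj (vE exy) S_of_cover 3.
Proof.
move=> cxy; have [a [_ [exa _ ay _ _]]] := other_neighbours exy.
pose P := if x \in C then [:: vW exy; vX x] else [:: vW exy; vW exa; vZ exa].
have -> : 3 = size [:: [:: vZ exy]; [:: vW (edge_sym exy); vX y]; P] by [].
apply: fan_of_paths.
  apply/and4P; split=> //=.
  - by rewrite vZ_in_S_of_cover // /adjG' /= eqxx.
  - by rewrite vX_in_S_of_cover ?(chosen_cover exy) // /adjG' /= setUC !eqxx.
  rewrite /P; case: ifP => xC /=; first by rewrite vX_in_S_of_cover // /adjG' /= !eqxx.
  by rewrite vZ_in_S_of_cover ?/chosen ?xC // /adjG' /= !eqxx eq_sym ay.
have := @uniq_fan_wE_raw x y a (x \in C) (edge_neq exy) ay.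
by rewrite -(map_inj_uniq val_inj) /P; case: (x \in C).
Qed.

Lemma fan_wE (v : V) s : val v = inr (inl s) -> fan adj v S_of_cover 3.
Proof.
case: v => q es /= qs; subst q.
have /existsP[x /existsP[y /andP[exy /eqP sxy]]] := es; subst s.
have [cxy|cyx] := orP (chosen_or exy).
  by rewrite (_ : (exist (validv e) _ es : V) = vE exy); [apply: fan_wE_chosen | apply: val_inj].
rewrite (_ : (exist (validv e) _ es : V) = vE (edge_sym exy)); first exact: fan_wE_chosen.
by apply: val_inj; rewrite /= setUC.
Qed.

Lemma vc_set_S_of_cover : vc_set adj (@rG' T e) S_of_cover.
Proof.
move=> [q qv] _; case: q qv => [[x|[x y]]|[s|[x y]]] qv.
- exact: (fan_of_paths (L := [::])).
- exact: (fan_w qv).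
- exact: (@fan_wE (exist (validv e) _ qv) s).
- exact: (fan_of_paths (L := [::])).
Qed.

Lemma card_S_of_cover : #|S_of_cover| = #|C| + nedges e.
Proof.
rewrite /S_of_cover; set Z := [set v : V | _].
have vX_inj : injective vX by move=> x x' /(congr1 val) [].
have disj : vX @: C :&: Z = set0.
  by apply/setP => v; rewrite !inE; apply/andP => -[/imsetP[x _ ->]].
rewrite cardsU disj cards0 subn0 card_imset //; congr (_ + _).
have gadget_inj : {in Z &, injective (fun v : V => gadget (val v))}.
  move=> [[[?|[? ?]]|[?|[x1 y1]]] h1] [[[?|[? ?]]|[?|[x2 y2]]] h2]; rewrite !inE //=.
  move=> c1 c2 [/set2_eq_cases[[ex ey]|[ex ey]]]; subst; first exact: val_inj.
  by move: (chosen_excl h1 c1); rewrite c2.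
have inr_inj : injective (@inr T {set T}) by move=> ? ? [].
rewrite -(card_in_imset gadget_inj) /nedges -(card_imset _ inr_inj).
apply: eq_card => k; apply/imsetP/imsetP => [[v]|[s]].
  case: v => [[[?|[? ?]]|[?|[x y]]] exy]; rewrite inE //= => _ ->.
  by exists [set x; y]; rewrite // inE is_edge_set2.
rewrite inE => /existsP[x /existsP[y /andP[exy /eqP ->]]] ->.
have [cxy|cyx] := orP (chosen_or exy); first by exists (vZ exy); rewrite // inE.
by exists (vZ (edge_sym exy)); rewrite ?inE //= setUC.
Qed.
End UpperBound.
End Gprime.

Theorem lemma3 (T : finType) (e : rel T)
  (e_sym : symmetric e) (e_irr : irreflexive e)
  (e_cubic : forall x : T, #|[set y | e x y]| = 3) :
  is_kappa (@adjG' T e) (@rG' T e) (tau e + nedges e).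
Proof.
split; last by move=> S; apply: vc_set_card_ge.
have [C C_cover <-] := tau_cover e.
exists (S_of_cover e C); split; first exact: vc_set_S_of_cover.
exact: card_S_of_cover.
Qed.
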